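(* Let $\mathcal{H}_1=(\mathcal{A}_1,\Delta_{\mathcal{A}_1},S_{\mathcal{A}_1},\varepsilon_{\mathcal{A}_1})$ and $\mathcal{H}_2=(\mathcal{A}_2,\Delta_{\mathcal{A}_2},S_{\mathcal{A}_2},\varepsilon_{\mathcal{A}_2})$ be Hopf algebras over a field $k$, $\mathcal{B}$ a unital $k$-algebra, and $\alpha:\mathcal{A}_1\to\mathcal{B}\otimes\mathcal{A}_2$ a quantum family of homomorphisms from $\mathcal{H}_1$ to $\mathcal{H}_2$. Then for all $a,a'\in\mathcal{A}_1$, \[\alpha(a)_{12}\,\alpha(a')_{13}=\alpha(a')_{13}\,\alpha(a)_{12}\quad\text{in }\mathcal{B}\otimes\mathcal{A}_2\otimes\mathcal{A}_2.\]
   Context: Sweedler notation $\Delta(a)=a_{(1)}\otimes a_{(2)}$. For $x\in\mathcal{B}\otimes\mathcal{A}_2$, $x_{12}$ and $x_{13}$ denote $x$ placed in legs (1,2), resp. (1,3), of $\mathcal{B}\otimes\mathcal{A}_2\otimes\mathcal{A}_2$ with $\mathds{1}$ in the remaining leg. Definition: a unital algebra homomorphism $\alpha:\mathcal{A}_1\to\mathcal{B}\otimes\mathcal{A}_2$ is a quantum family of homomorphisms from $\mathcal{H}_1$ to $\mathcal{H}_2$ if $\alpha(a_{(1)})_{12}\alpha(a_{(2)})_{13}=(\mathrm{id}_{\mathcal{B}}\otimes\Delta_{\mathcal{A}_2})(\alpha(a))$ for all $a\in\mathcal{A}_1$. *)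

From HB Require Import structures.
From mathcomp Require Import all_boot all_order all_algebra.
Set Implicit Arguments. Unset Strict Implicit. Unset Printing Implicit Defensive.
Import GRing.Theory.
Local Open Scope ring_scope.

Section HopfDefs.
Variable k : fieldType.

Definition bilin (U V W : lmodType k) (f : U -> V -> W) : Prop :=
  (forall u, linear (f u)) /\ (forall v, linear (fun u => f u v)).

Definition trilin (U V X W : lmodType k) (f : U -> V -> X -> W) : Prop :=
  [/\ forall u v, linear (f u v),
      forall u x, linear (fun v => f u v x)
    & forall v x, linear (fun u => f u v x)].

(* (T, t) is a tensor product U (x) V over k: t is bilinear, every bilinear
   map factors linearly through t, and the factorisation is unique. *)
Definition is_tensor2 (U V T : lmodType k) (t : U -> V -> T) : Prop :=
  [/\ bilin t,
      forall (W : lmodType k) (f : U -> V -> W), bilin f ->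
        exists g : T -> W, linear g /\ forall u v, g (t u v) = f u v
    & forall (W : lmodType k) (g h : T -> W), linear g -> linear h ->
        (forall u v, g (t u v) = h (t u v)) -> forall x, g x = h x].

Definition is_tensor3 (U V X T : lmodType k) (t : U -> V -> X -> T) : Prop :=
  [/\ trilin t,
      forall (W : lmodType k) (f : U -> V -> X -> W), trilin f ->
        exists g : T -> W, linear g /\ forall u v x, g (t u v x) = f u v x
    & forall (W : lmodType k) (g h : T -> W), linear g -> linear h ->
        (forall u v x, g (t u v x) = h (t u v x)) -> forall y, g y = h y].

Definition alg_tensor2 (U V T : algType k) (t : U -> V -> T) : Prop :=
  [/\ is_tensor2 t, t 1 1 = 1
    & forall u v u' v', t u v * t u' v' = t (u * u') (v * v')].

Definition alg_tensor3 (U V X T : algType k) (t : U -> V -> X -> T) : Prop :=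
  [/\ is_tensor3 t, t 1 1 1 = 1
    & forall u v x u' v' x', t u v x * t u' v' x' = t (u * u') (v * v') (x * x')].

Definition alg_morph (A C : algType k) (f : A -> C) : Prop :=
  [/\ linear f, f 1 = 1 & forall x y, f (x * y) = f x * f y].

Definition alg_char (A : algType k) (e : A -> k) : Prop :=
  [/\ forall (c : k) x y, e (c *: x + y) = c * e x + e y,
      e 1 = 1 & forall x y, e (x * y) = e x * e y].

(* (A, Delta, S, eps) with Delta : A -> T, where (T, t) is A (x) A. *)
Definition Hopf (A T : algType k) (t : A -> A -> T)
    (Delta : A -> T) (S : A -> A) (eps : A -> k) : Prop :=
  [/\ alg_tensor2 t, alg_morph Delta, alg_char eps & linear S] /\
   (* coassociativity: (Delta (x) id) Delta = (id (x) Delta) Delta *)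
   exists (T3 : lmodType k) (t3 : A -> A -> A -> T3)
          (E : T -> A -> T3) (F : A -> T -> T3) (L R : T -> T3),
     is_tensor3 t3 /\
     [/\ (forall b, linear (fun x => E x b)) /\ (forall c d b, E (t c d) b = t3 c d b),
         (forall a, linear (F a)) /\ (forall a c d, F a (t c d) = t3 a c d),
         linear L /\ (forall c d, L (t c d) = E (Delta c) d),
         linear R /\ (forall c d, R (t c d) = F c (Delta d))
       & forall a, L (Delta a) = R (Delta a)] /\
   (* counit: (eps (x) id) Delta = id = (id (x) eps) Delta *)
   exists C1 C2 : T -> A,
     [/\ linear C1, linear C2,
         forall a b, C1 (t a b) = eps a *: b,
         forall a b, C2 (t a b) = eps b *: a
       & forall x, C1 (Delta x) = x /\ C2 (Delta x) = x] /\
   (* antipode: m (S (x) id) Delta = eta eps = m (id (x) S) Delta *)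
   exists M1 M2 : T -> A,
     [/\ linear M1, linear M2,
         forall a b, M1 (t a b) = S a * b,
         forall a b, M2 (t a b) = a * S b
       & forall x, M1 (Delta x) = (eps x)%:A /\ M2 (Delta x) = (eps x)%:A].

Definition is_leg12 (B A2 TB T3 : algType k) (tB : B -> A2 -> TB)
    (t3 : B -> A2 -> A2 -> T3) (l : TB -> T3) : Prop :=
  linear l /\ forall b a, l (tB b a) = t3 b a 1.
Definition is_leg13 (B A2 TB T3 : algType k) (tB : B -> A2 -> TB)
    (t3 : B -> A2 -> A2 -> T3) (l : TB -> T3) : Prop :=
  linear l /\ forall b a, l (tB b a) = t3 b 1 a.

(* alpha : A1 -> B (x) A2 unital algebra homomorphism with
   alpha(a_(1))_12 alpha(a_(2))_13 = (id_B (x) Delta_2)(alpha(a)).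
   Phi is the linear map c (x) d |-> alpha(c)_12 alpha(d)_13 on A1 (x) A1,
   so that Phi (Delta1 a) is the Sweedler sum; D is id_B (x) Delta_2. *)
Definition qfam_hom (A1 T11 B A2 TB T22 T3 : algType k)
    (t11 : A1 -> A1 -> T11) (Delta1 : A1 -> T11)
    (tB : B -> A2 -> TB) (t22 : A2 -> A2 -> T22) (Delta2 : A2 -> T22)
    (t3 : B -> A2 -> A2 -> T3) (leg12 leg13 : TB -> T3)
    (alpha : A1 -> TB) : Prop :=
  alg_morph alpha /\
  exists (Phi : T11 -> T3) (G : B -> T22 -> T3) (D : TB -> T3),
    [/\ linear Phi /\
          (forall c d, Phi (t11 c d) = leg12 (alpha c) * leg13 (alpha d)),
        (forall b, linear (G b)) /\ (forall b c d, G b (t22 c d) = t3 b c d),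
        linear D /\ (forall b a, D (tB b a) = G b (Delta2 a))
      & forall a, Phi (Delta1 a) = D (alpha a)].

End HopfDefs.

(* Write P c := alpha(c)_12 and Q c := alpha(c)_13.  Both are algebra maps, and the
   defining identity of a quantum family says that their convolution
   P * Q = m (P (x) Q) Delta equals (id (x) Delta_2) alpha, so it is multiplicative.
   For such a pair of algebra maps out of a Hopf algebra the antipode recovers each
   factor from the convolution:
     Q a = sum P(S a_(1)) (P*Q)(a_(2))   and   P b = sum (P*Q)(b_(1)) Q(S b_(2)).
   Multiplicativity of P * Q turns the first formula into
     Q a (P*Q)(z) = sum P(z_(1)) Q a Q(z_(2)),
   and substituting this into the second one gives Q a P b = P b Q a.
   Sweedler sums sum f(a_(1), a_(2)) are the values at Delta a of the linear lift
   of a bilinear f, given by the universal property of the tensor product. *)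

From HB Require Import structures.
From mathcomp Require Import all_boot all_order all_algebra.
From Stdlib Require Import ClassicalEpsilon FunctionalExtensionality.
Set Implicit Arguments. Unset Strict Implicit. Unset Printing Implicit Defensive.
Import GRing.Theory.
Local Open Scope ring_scope.

Section LinearMaps.
Variable k : fieldType.

Lemma linear_comp (U V W : lmodType k) (f : U -> V) (g : V -> W) :
  linear f -> linear g -> linear (fun x => g (f x)).
Proof. by move=> lf lg r x y; rewrite lf lg. Qed.

Lemma linear_mull (X : algType k) (c : X) : linear (fun x => c * x).
Proof. by move=> r x y; rewrite mulrDr scalerAr. Qed.

Lemma linear_mulr (X : algType k) (c : X) : linear (fun x => x * c).
Proof. by move=> r x y; rewrite mulrDl scalerAl. Qed.

Lemma bilin_mul (U V : lmodType k) (X : algType k) (f : U -> X) (g : V -> X) :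
  linear f -> linear g -> bilin (fun u v => f u * g v).
Proof.
move=> lf lg; split=> [u|v]; first exact: linear_comp lg (linear_mull _).
exact: linear_comp lf (linear_mulr _).
Qed.

End LinearMaps.

Section TensorLift.
Variables (k : fieldType) (U V T : lmodType k) (t : U -> V -> T).
Hypothesis tensorT : is_tensor2 t.

(* Only a bilinear f has a lift; for any other f the value is an arbitrary map. *)
Definition tensor_lift (W : lmodType k) (f : U -> V -> W) : T -> W :=
  epsilon (inhabits (fun _ => 0))
    (fun g => linear g /\ forall u v, g (t u v) = f u v).

Lemma tensor_lift_ext (W : lmodType k) (f g : U -> V -> W) :
  (forall u v, f u v = g u v) -> tensor_lift f = tensor_lift g.
Proof.
move=> fg; suff -> : f = g by [].
by apply: functional_extensionality => u; apply: functional_extensionality.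
Qed.

Section Bilinear.
Variables (W : lmodType k) (f : U -> V -> W).
Hypothesis bilin_f : bilin f.

Lemma tensor_lift_spec :
  linear (tensor_lift f) /\ forall u v, tensor_lift f (t u v) = f u v.
Proof. by case: tensorT => _ lift _; exact: epsilon_spec (lift _ _ bilin_f). Qed.

Lemma tensor_lift_linear : linear (tensor_lift f).
Proof. by case: tensor_lift_spec. Qed.

Lemma tensor_liftE u v : tensor_lift f (t u v) = f u v.
Proof. by case: tensor_lift_spec. Qed.

Lemma tensor_lift_unique (g : T -> W) :
  linear g -> (forall u v, g (t u v) = f u v) -> forall x, g x = tensor_lift f x.
Proof.
move=> lg gE; case: tensorT => _ _ uniq.
by apply: uniq => // [|u v]; [exact: tensor_lift_linear | rewrite gE tensor_liftE].
Qed.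

End Bilinear.

Lemma tensor_lift_comp (W X : lmodType k) (f : U -> V -> W) (g : W -> X) :
  bilin f -> linear g ->
  forall x, g (tensor_lift f x) = tensor_lift (fun u v => g (f u v)) x.
Proof.
move=> bilin_f lg; have [lf1 lf2] := bilin_f.
apply: tensor_lift_unique => [||u v].
- by split=> [u|v]; apply: linear_comp lg.
- exact: linear_comp (tensor_lift_linear _) lg.
- by rewrite tensor_liftE.
Qed.

Lemma linear_tensor_lift_family (W D : lmodType k) (F : D -> U -> V -> W) :
  (forall d, bilin (F d)) -> (forall u v, linear (fun d => F d u v)) ->
  forall x, linear (fun d => tensor_lift (F d) x).
Proof.
move=> bilinF linF x r d d'; symmetry.
pose g y := r *: tensor_lift (F d) y + tensor_lift (F d') y.
apply: (tensor_lift_unique (bilinF _) (g := g)) => [s y z|u v]; rewrite /g.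
  by rewrite !(tensor_lift_linear (bilinF _)) !scalerDr !scalerA addrACA [r * s]mulrC.
by rewrite linF !tensor_liftE.
Qed.

End TensorLift.

Section AlgebraTensor.
Variables (k : fieldType) (U V T : algType k) (t : U -> V -> T).
Hypothesis tensorT : alg_tensor2 t.

Lemma tensor_mul_ext (X : algType k) (h1 h2 h3 : T -> X) :
  linear h1 -> linear h2 -> linear h3 ->
  (forall u v u' v', h1 (t u v) * h2 (t u' v') = h3 (t (u * u') (v * v'))) ->
  forall x y, h1 x * h2 y = h3 (x * y).
Proof.
case: tensorT => -[_ _ uniq] _ tM lh1 lh2 lh3 hM.
have h1M u' v' x : h1 x * h2 (t u' v') = h3 (x * t u' v').
  apply: (uniq _ (fun x => h1 x * h2 (t u' v')) (fun x => h3 (x * t u' v'))) => [||u v].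
  - exact: linear_comp lh1 (linear_mulr _).
  - exact: linear_comp (linear_mulr _) lh3.
  - by rewrite hM tM.
move=> x; apply: (uniq _ (fun y => h1 x * h2 y) (fun y => h3 (x * y))) => [||u v].
- exact: linear_comp lh2 (linear_mull _).
- exact: linear_comp (linear_mull _) lh3.
- exact: h1M.
Qed.

Lemma tensor_alg_morph (X : algType k) (h : T -> X) : linear h -> h (t 1 1) = 1 ->
  (forall u v u' v', h (t u v) * h (t u' v') = h (t (u * u') (v * v'))) ->
  alg_morph h.
Proof.
case: tensorT => _ t1 _ lh h1 hM; split=> // [|x y]; first by rewrite -t1.
by rewrite (tensor_mul_ext lh lh lh hM).
Qed.

Lemma tensor_lift_mul (W : lmodType k) (f : U -> V -> W) : bilin f ->
  forall x y, tensor_lift t f (x * y) =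
    tensor_lift t (fun u v => tensor_lift t (fun u' v' => f (u * u') (v * v')) y) x.
Proof.
case: tensorT => tT _ tM bilin_f; have [lf1 lf2] := bilin_f.
have bilin_shift u v : bilin (fun u' v' => f (u * u') (v * v')).
  split=> [u'|v']; first exact: linear_comp (linear_mull _) (lf1 _).
  exact: linear_comp (linear_mull _) (lf2 _).
move=> x y.
apply: (tensor_lift_unique tT _ (g := fun x => tensor_lift t f (x * y))) => [||u v].
- split=> [u|v]; apply: linear_tensor_lift_family => // [u' v'].
    exact: linear_comp (linear_mulr _) (lf1 _).
  exact: linear_comp (linear_mulr _) (lf2 _).
- exact: linear_comp (linear_mulr _) (tensor_lift_linear tT bilin_f).
apply: (tensor_lift_unique tT (bilin_shift u v)
  (g := fun y => tensor_lift t f (t u v * y))) => [|u' v'].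
  exact: linear_comp (linear_mull _) (tensor_lift_linear tT bilin_f).
by rewrite tM tensor_liftE.
Qed.

End AlgebraTensor.

Section Sweedler.
Variables (k : fieldType) (A T : algType k) (t : A -> A -> T).
Variables (Delta : A -> T) (S : A -> A) (eps : A -> k).
Hypothesis hopfA : Hopf t Delta S eps.

Definition sweedler (W : lmodType k) (f : A -> A -> W) (a : A) : W :=
  tensor_lift t f (Delta a).

Let alg_tensorT : alg_tensor2 t. Proof. by case: hopfA => -[]. Qed.
Let tensorT : is_tensor2 t. Proof. by case: alg_tensorT. Qed.
Let Delta_morph : alg_morph Delta. Proof. by case: hopfA => -[]. Qed.
Let eps_char : alg_char eps. Proof. by case: hopfA => -[]. Qed.
Let S_linear : linear S. Proof. by case: hopfA => -[]. Qed.

Lemma sweedler_ext (W : lmodType k) (f g : A -> A -> W) a :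
  (forall u v, f u v = g u v) -> sweedler f a = sweedler g a.
Proof. by move=> /tensor_lift_ext fg; rewrite /sweedler fg. Qed.

Lemma sweedler_linear (W : lmodType k) (f : A -> A -> W) :
  bilin f -> linear (sweedler f).
Proof.
by case: Delta_morph => lD _ _ bf; exact: linear_comp lD (tensor_lift_linear tensorT bf).
Qed.

Lemma sweedler_comp (W X : lmodType k) (f : A -> A -> W) (g : W -> X) :
  bilin f -> linear g -> forall a, g (sweedler f a) = sweedler (fun u v => g (f u v)) a.
Proof. by move=> bf lg a; exact: tensor_lift_comp. Qed.

Lemma sweedler_mul (W : lmodType k) (f : A -> A -> W) : bilin f -> forall x y,
  sweedler f (x * y) = sweedler (fun u v => sweedler (fun u' v' => f (u * u') (v * v')) y) x.
Proof.
by case: Delta_morph => _ _ DM bf x y; rewrite /sweedler DM tensor_lift_mul.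
Qed.

Section Coassociativity.
Variables (W : lmodType k) (h : A -> A -> A -> W).
Hypothesis trilin_h : trilin h.

Lemma bilin_sweedler_l : bilin (fun c d => sweedler (fun x y => h x y d) c).
Proof.
have [lh3 lh2 lh1] := trilin_h.
have bilin_d d : bilin (fun x y => h x y d) by split=> [x|y]; [exact: lh2 | exact: lh1].
split=> [c|d]; last exact: sweedler_linear.
exact: linear_tensor_lift_family.
Qed.

Lemma bilin_sweedler_r : bilin (fun c d => sweedler (fun x y => h c x y) d).
Proof.
have [lh3 lh2 lh1] := trilin_h.
have bilin_c c : bilin (h c) by split=> [x|y]; [exact: lh3 | exact: lh2].
split=> [c|d]; first exact: sweedler_linear.
apply: linear_tensor_lift_family => // x y; exact: lh1.
Qed.

Lemma sweedler_coassoc a :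
  sweedler (fun c d => sweedler (fun x y => h x y d) c) a =
  sweedler (fun c d => sweedler (fun x y => h c x y) d) a.
Proof.
have [lh3 lh2 lh1] := trilin_h.
case: hopfA => _ [T3 [t3 [E [F [L [R [tensor3 [[[lE EE] [lF FE] [lL LE] [lR RE] coassoc] _]]]]]]]].
have [_ lift3 _] := tensor3; have [H [lH HE]] := lift3 _ _ trilin_h.
have HEE d y : H (E y d) = tensor_lift t (fun x y => h x y d) y.
  apply: (tensor_lift_unique tensorT _ (g := fun y => H (E y d))) => [||x z].
  - by split=> [x|z]; [exact: lh2 | exact: lh1].
  - exact: linear_comp (lE d) lH.
  - by rewrite EE HE.
have HFE c y : H (F c y) = tensor_lift t (h c) y.
  apply: (tensor_lift_unique tensorT _ (g := fun y => H (F c y))) => [||x z].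
  - by split=> [x|z]; [exact: lh3 | exact: lh2].
  - exact: linear_comp (lF c) lH.
  - by rewrite FE HE.
have HL x : H (L x) = tensor_lift t (fun c d => sweedler (fun x y => h x y d) c) x.
  apply: (tensor_lift_unique tensorT bilin_sweedler_l (g := fun x => H (L x))) => [|c d].
    exact: linear_comp lL lH.
  by rewrite LE HEE.
have HR x : H (R x) = tensor_lift t (fun c d => sweedler (fun x y => h c x y) d) x.
  apply: (tensor_lift_unique tensorT bilin_sweedler_r (g := fun x => H (R x))) => [|c d].
    exact: linear_comp lR lH.
  by rewrite RE HFE.
by rewrite /sweedler -HL -HR coassoc.
Qed.

End Coassociativity.

Lemma sweedler_counit_l (W : lmodType k) (g : A -> W) : linear g ->
  forall a, sweedler (fun c d => eps c *: g d) a = g a.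
Proof.
case: eps_char => leps _ _ lg a.
case: hopfA => _ [? [? [? [? [? [? [_ [_ [C1 [? [[lC1 _ C1E _ CDelta] _]]]]]]]]]]].
rewrite /sweedler -(tensor_lift_unique tensorT _ (g := fun x => g (C1 x))).
- by rewrite (CDelta a).1.
- split=> [c|d] r x y; first by rewrite lg scalerDr !scalerA mulrC.
  by rewrite leps scalerDl scalerA.
- exact: linear_comp lC1 lg.
- by move=> c d; rewrite C1E (GRing.scalable_linear lg).
Qed.

Lemma sweedler_counit_r (W : lmodType k) (g : A -> W) : linear g ->
  forall a, sweedler (fun c d => eps d *: g c) a = g a.
Proof.
case: eps_char => leps _ _ lg a.
case: hopfA => _ [? [? [? [? [? [? [_ [_ [? [C2 [[_ lC2 _ C2E CDelta] _]]]]]]]]]]].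
rewrite /sweedler -(tensor_lift_unique tensorT _ (g := fun x => g (C2 x))).
- by rewrite (CDelta a).2.
- split=> [c|d] r x y; last by rewrite lg scalerDr !scalerA mulrC.
  by rewrite leps scalerDl scalerA.
- exact: linear_comp lC2 lg.
- by move=> c d; rewrite C2E (GRing.scalable_linear lg).
Qed.

Lemma sweedler_antipode_l (W : lmodType k) (g : A -> W) : linear g ->
  forall a, sweedler (fun c d => g (S c * d)) a = eps a *: g 1.
Proof.
move=> lg a.
case: hopfA => _ [? [? [? [? [? [? [_ [_ [? [? [_ [M1 [? [lM1 _ M1E _ MDelta]]]]]]]]]]]]]].
rewrite /sweedler -(tensor_lift_unique tensorT _ (g := fun x => g (M1 x))).
- by rewrite (MDelta a).1 (GRing.scalable_linear lg).
- split=> [c|d]; first exact: linear_comp (linear_mull _) lg.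
  exact: linear_comp (linear_comp S_linear (linear_mulr _)) lg.
- exact: linear_comp lM1 lg.
- by move=> c d; rewrite M1E.
Qed.

Lemma sweedler_antipode_r (W : lmodType k) (g : A -> W) : linear g ->
  forall a, sweedler (fun c d => g (c * S d)) a = eps a *: g 1.
Proof.
move=> lg a.
case: hopfA => _ [? [? [? [? [? [? [_ [_ [? [? [_ [? [M2 [_ lM2 _ M2E MDelta]]]]]]]]]]]]]].
rewrite /sweedler -(tensor_lift_unique tensorT _ (g := fun x => g (M2 x))).
- by rewrite (MDelta a).2 (GRing.scalable_linear lg).
- split=> [c|d]; first exact: linear_comp (linear_comp S_linear (linear_mull _)) lg.
  exact: linear_comp (linear_mulr _) lg.
- exact: linear_comp lM2 lg.
- by move=> c d; rewrite M2E.
Qed.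

Lemma sweedler_antipode_cancel_l (W : lmodType k) (g : A -> A -> W) : bilin g ->
  forall a, sweedler (fun c d => sweedler (fun x y => g (S c * x) y) d) a = g 1 a.
Proof.
move=> [lg1 lg2] a; rewrite -sweedler_coassoc; last first.
  split=> [c x|c y|x y]; first exact: lg1.
    exact: linear_comp (linear_mull _) (lg2 _).
  exact: linear_comp (linear_comp S_linear (linear_mulr _)) (lg2 _).
under sweedler_ext => c d do rewrite (sweedler_antipode_l (lg2 d)).
exact: sweedler_counit_l.
Qed.

Lemma sweedler_antipode_cancel_r (W : lmodType k) (g : A -> A -> W) : bilin g ->
  forall a, sweedler (fun c d => sweedler (fun x y => g x (y * S d)) c) a = g a 1.
Proof.
move=> [lg1 lg2] a; rewrite sweedler_coassoc; last first.
  split=> [x y|x d|y d]; last exact: lg2.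
    exact: linear_comp (linear_comp S_linear (linear_mull _)) (lg1 _).
  exact: linear_comp (linear_mulr _) (lg1 _).
under sweedler_ext => c d do rewrite (sweedler_antipode_r (lg1 c)).
exact: sweedler_counit_r.
Qed.

Section Convolution.
Variables (X : algType k) (P Q : A -> X).
Hypotheses (P_morph : alg_morph P) (Q_morph : alg_morph Q).

Definition convolution : A -> X := sweedler (fun c d => P c * Q d).

Hypothesis convolution_mul : {morph convolution : x y / x * y}.

Let lP : linear P. Proof. by case: P_morph. Qed.
Let lQ : linear Q. Proof. by case: Q_morph. Qed.
Let P1 : P 1 = 1. Proof. by case: P_morph. Qed.
Let Q1 : Q 1 = 1. Proof. by case: Q_morph. Qed.
Let PM : {morph P : x y / x * y}. Proof. by case: P_morph. Qed.
Let QM : {morph Q : x y / x * y}. Proof. by case: Q_morph. Qed.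
Let bilin_PQ : bilin (fun c d => P c * Q d). Proof. exact: bilin_mul. Qed.

Lemma convolution_linear : linear convolution.
Proof. exact: sweedler_linear. Qed.

Lemma convolution_antipode_l a : sweedler (fun c d => P (S c) * convolution d) a = Q a.
Proof.
have expand c d : P (S c) * convolution d = sweedler (fun x y => P (S c * x) * Q y) d.
  rewrite (sweedler_comp bilin_PQ (linear_mull _)).
  by apply: sweedler_ext => x y; rewrite PM mulrA.
under sweedler_ext => c d do rewrite expand.
by rewrite (sweedler_antipode_cancel_l (g := fun w y => P w * Q y)) // P1 mul1r.
Qed.

Lemma convolution_antipode_r a : sweedler (fun c d => convolution c * Q (S d)) a = P a.
Proof.
have expand c d : convolution c * Q (S d) = sweedler (fun x y => P x * Q (y * S d)) c.
  rewrite (sweedler_comp bilin_PQ (linear_mulr _)).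
  by apply: sweedler_ext => x y; rewrite QM mulrA.
under sweedler_ext => c d do rewrite expand.
by rewrite (sweedler_antipode_cancel_r (g := fun x w => P x * Q w)) // Q1 mulr1.
Qed.

Lemma mulQ_convolution a z :
  Q a * convolution z = sweedler (fun u v => P u * (Q a * Q v)) z.
Proof.
pose N y := sweedler (fun u v => P u * (Q y * Q v)) z.
have bilin_N y : bilin (fun u v => P u * (Q y * Q v)).
  exact: bilin_mul lP (linear_comp lQ (linear_mull _)).
have lN : linear N.
  apply: linear_tensor_lift_family => // u v.
  exact: linear_comp (linear_comp lQ (linear_mulr _)) (linear_mull _).
have convolution_mulr d : convolution (d * z) = sweedler (fun x y => P x * N y) d.
  rewrite /convolution sweedler_mul //; apply: sweedler_ext => x y.
  rewrite (sweedler_comp (bilin_N y) (linear_mull _)).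
  by apply: sweedler_ext => u v; rewrite PM QM !mulrA.
have expand c d :
    P (S c) * convolution d * convolution z = sweedler (fun x y => P (S c * x) * N y) d.
  rewrite -mulrA -convolution_mul convolution_mulr.
  rewrite (sweedler_comp (bilin_mul lP lN) (linear_mull _)).
  by apply: sweedler_ext => x y; rewrite PM mulrA.
rewrite -{1}[Q a](convolution_antipode_l a) (sweedler_comp _ (linear_mulr _)); last first.
  exact: bilin_mul (linear_comp S_linear lP) convolution_linear.
under sweedler_ext => c d do rewrite expand.
by rewrite (sweedler_antipode_cancel_l (g := fun w y => P w * N y)) ?P1 ?mul1r //; exact: bilin_mul.
Qed.

Lemma convolution_mul_comm a b : GRing.comm (P a) (Q b).
Proof.
have expand c d : Q b * (convolution c * Q (S d)) =
    sweedler (fun x y => P x * (Q b * Q (y * S d))) c.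
  rewrite mulrA mulQ_convolution.
  rewrite (sweedler_comp (bilin_mul lP (linear_comp lQ (linear_mull _))) (linear_mulr _)).
  by apply: sweedler_ext => x y; rewrite QM !mulrA.
rewrite /GRing.comm -{2}[P a](convolution_antipode_r a).
rewrite (sweedler_comp _ (linear_mull _)); last first.
  exact: bilin_mul convolution_linear (linear_comp S_linear lQ).
under sweedler_ext => c d do rewrite expand.
rewrite (sweedler_antipode_cancel_r (g := fun x w => P x * (Q b * Q w))) ?Q1 ?mulr1 //.
exact: bilin_mul lP (linear_comp lQ (linear_mull _)).
Qed.

End Convolution.

End Sweedler.

Lemma alg_morph_comp (k : fieldType) (A B C : algType k) (f : A -> B) (g : B -> C) :
  alg_morph f -> alg_morph g -> alg_morph (fun x => g (f x)).
Proof.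
move=> [lf f1 fM] [lg g1 gM]; split=> [||x y]; first exact: linear_comp lf lg.
  by rewrite f1 g1.
by rewrite fM gM.
Qed.

Section Legs.
Variables (k : fieldType) (B A2 TB T3 : algType k).
Variables (tB : B -> A2 -> TB) (t3 : B -> A2 -> A2 -> T3).
Hypotheses (tensorB : alg_tensor2 tB) (tensor3 : alg_tensor3 t3).

Lemma leg12_alg_morph (l : TB -> T3) : is_leg12 tB t3 l -> alg_morph l.
Proof.
case: tensor3 => _ t3_1 t3M [ll lE]; apply: (tensor_alg_morph tensorB) => // [|u v u' v'].
  by rewrite lE.
by rewrite !lE t3M mulr1.
Qed.

Lemma leg13_alg_morph (l : TB -> T3) : is_leg13 tB t3 l -> alg_morph l.
Proof.
case: tensor3 => _ t3_1 t3M [ll lE]; apply: (tensor_alg_morph tensorB) => // [|u v u' v'].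
  by rewrite lE.
by rewrite !lE t3M mulr1.
Qed.

Lemma qfam_hom_convolution_mul (A1 T11 T22 : algType k)
    (t11 : A1 -> A1 -> T11) (Delta1 : A1 -> T11)
    (t22 : A2 -> A2 -> T22) (Delta2 : A2 -> T22) (leg12 leg13 : TB -> T3)
    (alpha : A1 -> TB) :
  is_tensor2 t11 -> alg_tensor2 t22 -> alg_morph Delta2 ->
  alg_morph (fun c => leg12 (alpha c)) -> alg_morph (fun c => leg13 (alpha c)) ->
  qfam_hom t11 Delta1 tB t22 Delta2 t3 leg12 leg13 alpha ->
  {morph convolution t11 Delta1 (fun c => leg12 (alpha c)) (fun c => leg13 (alpha c)) :
     x y / x * y}.
Proof.
move=> tensor11 tensor22 [_ _ Delta2M] [lP _ _] [lQ _ _].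
move=> [[_ _ alphaM] [Phi [G [D [[lPhi PhiE] [lG GE] [lD DE] PhiDelta]]]]].
have [_ _ t3M] := tensor3.
have convolutionE z : convolution t11 Delta1 (fun c => leg12 (alpha c))
    (fun c => leg13 (alpha c)) z = D (alpha z).
  rewrite -PhiDelta /convolution /sweedler.
  by rewrite -(tensor_lift_unique tensor11 (bilin_mul lP lQ) lPhi PhiE).
have GM b b' : forall y y', G b y * G b' y' = G (b * b') (y * y').
  by apply: (tensor_mul_ext tensor22) => // u v u' v'; rewrite !GE t3M.
have DM : forall x y, D x * D y = D (x * y).
  by apply: (tensor_mul_ext tensorB) => // u v u' v'; rewrite !DE GM Delta2M.
by move=> x y; rewrite !convolutionE alphaM DM.
Qed.

End Legs.

Theorem theorem3p5 (k : fieldType)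
  (A1 T11 A2 T22 B TB T3 : algType k)
  (t11 : A1 -> A1 -> T11) (Delta1 : A1 -> T11) (S1 : A1 -> A1) (eps1 : A1 -> k)
  (t22 : A2 -> A2 -> T22) (Delta2 : A2 -> T22) (S2 : A2 -> A2) (eps2 : A2 -> k)
  (tB : B -> A2 -> TB) (t3 : B -> A2 -> A2 -> T3)
  (leg12 leg13 : TB -> T3) (alpha : A1 -> TB) :
  Hopf t11 Delta1 S1 eps1 ->
  Hopf t22 Delta2 S2 eps2 ->
  alg_tensor2 tB ->
  alg_tensor3 t3 ->
  is_leg12 tB t3 leg12 ->
  is_leg13 tB t3 leg13 ->
  qfam_hom t11 Delta1 tB t22 Delta2 t3 leg12 leg13 alpha ->
  forall a a' : A1,
    leg12 (alpha a) * leg13 (alpha a') = leg13 (alpha a') * leg12 (alpha a).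
Proof.
move=> hopf1 [[tensor22 Delta2_morph _ _] _] tensorB tensor3 is12 is13 qfam a a'.
have [alpha_morph _] := qfam.
have P_morph := alg_morph_comp alpha_morph (leg12_alg_morph tensorB tensor3 is12).
have Q_morph := alg_morph_comp alpha_morph (leg13_alg_morph tensorB tensor3 is13).
have tensor11 : is_tensor2 t11 by case: hopf1 => -[[]].
have conv_mul := qfam_hom_convolution_mul tensorB tensor3 tensor11 tensor22
  Delta2_morph P_morph Q_morph qfam.
exact: (convolution_mul_comm hopf1 P_morph Q_morph conv_mul).
Qed.
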